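(* Let $\pi_1,\pi_2,\pi_3,\pi_4$ be permutations of $[8]=\{1,\dots,8\}$. Call a permutation $\sigma$ of $[8]$ bad if there is no permutation $\tau$ of $[8]$ that is simultaneously a derangement of each of $\pi_1,\pi_2,\pi_3,\pi_4,\sigma$. Then there are at most $96$ bad permutations. Moreover, if there are more than $24$ bad permutations, then there exist a permutation $\sigma_0$ of $[8]$ and a set $I\subseteq[8]$ with $|I|=5$ such that every bad permutation $\tau$ satisfies $\tau(i)=\sigma_0(i)$ for at least four elements $i\in I$.
   Context: A permutation $\tau$ of $[k]$ is a derangement of a permutation $\pi$ of $[k]$ if $\tau(i)\neq\pi(i)$ for every $i\in[k]$. *)

From mathcomp Require Import all_boot all_order all_fingroup.
Set Implicit Arguments. Unset Strict Implicit. Unset Printing Implicit Defensive.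

Definition derangement_of (k : nat) (tau pi : 'S_k) : bool :=
  [forall i, tau i != pi i].

Definition bad (p1 p2 p3 p4 sigma : 'S_8) : bool :=
  ~~ [exists tau : 'S_8,
        [&& derangement_of tau p1, derangement_of tau p2, derangement_of tau p3,
            derangement_of tau p4 & derangement_of tau sigma]].

Definition bad_set (p1 p2 p3 p4 : 'S_8) : {set 'S_8} :=
  [set s | bad p1 p2 p3 p4 s].

From mathcomp Require Import all_boot all_order all_fingroup.
From mathcomp Require Import zify.
Set Implicit Arguments. Unset Strict Implicit. Unset Printing Implicit Defensive.

(* Let E relate x to p1 x, ..., p4 x: every row and every column of E has at
   most four entries. A permutation s is bad iff the pairs (x, y) off E and
   off the graph of s contain no perfect matching, i.e., by Hall's theorem,
   iff some rectangle S x U with |S| + |U| = 9 is covered by E and the graph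
   of s. The degree bound forces S x U to be 4 x 5 or 5 x 4, and in a 4 x 5
   rectangle every row of S misses exactly one column of U, which s must
   hit: s is determined on S. Comparing the rectangle of one bad s1 with that
   of any other bad s, either s agrees with s1 on its four rows, leaving at
   most 4! = 24 bad permutations, or off the graph of some s0, E covers a
   5 x 5 rectangle I x s0(I) up to a single cell. In the latter case every
   bad permutation agrees with s0 on four points of I, and there are at most
   3! + 5 (4! - 3!) = 96 such permutations. *)

(* [lia] sees [#|A|] as an atom up to syntax only, and the same cardinal often
   occurs with different (convertible) instance paths; [set] identifies the
   occurrences in the goal, so the relevant facts must be moved there first. *)
Ltac abstract_cards :=
  repeat match goal with |- context [#|?A|] =>
    let n := fresh "n" in set n := #|A|; clearbody n end.

Lemma subset_of_card (T : finType) (A : {set T}) k :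
  k <= #|A| -> exists2 B : {set T}, B \subset A & #|B| = k.
Proof.
move=> leKA; have : 0 < #|[set B : {set T} | B \subset A & #|B| == k]|.
  by rewrite cards_draws bin_gt0.
by case/card_gt0P=> B; rewrite inE => /andP[sBA /eqP]; exists B.
Qed.

Lemma card_set_sum (T : finType) (A : {set T}) (P : pred T) :
  #|[set x in A | P x]| = \sum_(x in A) P x.
Proof.
rewrite -sum1_card big_mkcond /= [RHS]big_mkcond /=; apply: eq_bigr => x _.
by rewrite !inE; case: (x \in A); case: (P x).
Qed.

Lemma card_le1_sub1 (T : finType) (x0 : T) (A : {set T}) :
  #|A| <= 1 -> exists c, A \subset [set c].
Proof.
move=> leA1; have [->|[a Aa]] := set_0Vmem A; first by exists x0; apply: sub0set.
exists a; apply/subsetP=> y Ay; have /card_le1P/(_ a Aa y) eA := leA1.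
by rewrite inE -[_ == _]/(y \in pred1 a) -eA.
Qed.

Lemma card_disjoint_sub (T : finType) (A D R : {set T}) :
  A \subset R -> D \subset R -> [disjoint A & D] -> #|A| + #|D| <= #|R|.
Proof.
move=> sAR sDR disAD; have [_] := leq_card_setU A D; rewrite disAD => /eqP <-.
by apply: subset_leq_card; rewrite subUset sAR sDR.
Qed.

Lemma card_bigcup_le (T I : finType) (P : pred I) (F : I -> {set T}) :
  #|\bigcup_(i | P i) F i| <= \sum_(i | P i) #|F i|.
Proof.
elim/big_rec2: _ => [|i n A _ leAn]; first by rewrite cards0.
by apply: leq_trans (leq_card_setU _ _) _; rewrite leq_add2l.
Qed.

Lemma card_perm_imset (T : finType) (s : {perm T}) (A : {set T}) : #|s @: A| = #|A|.
Proof. exact: card_imset _ (@perm_inj _ s). Qed.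

Lemma perm_imsetK (T : finType) (s : {perm T}) (A : {set T}) : (s^-1)%g @: (s @: A) = A.
Proof. by rewrite -imset_comp (eq_imset _ (permK s)) imset_id. Qed.

Lemma card_le4 (T : finType) (a b c d : T) : #|[set a; b; c; d]| <= 4.
Proof.
apply: leq_trans (card_size [:: a; b; c; d]); apply/subset_leq_card/subsetP=> x.
by rewrite !inE -!orbA.
Qed.

(** * Hall's theorem *)

Section Hall.
Variable T : finType.
Implicit Types (r : rel T) (A S : {set T}) (f : T -> T).

Definition neighbours r S : {set T} := [set y | [exists x in S, r x y]].

Definition hall_condition r A := forall S, S \subset A -> #|S| <= #|neighbours r S|.

Definition matching r A f := {in A &, injective f} /\ {in A, forall x, r x (f x)}.

Lemma neighboursU r S1 S2 :
  neighbours r (S1 :|: S2) = neighbours r S1 :|: neighbours r S2.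
Proof.
apply/setP=> y; rewrite !inE; apply/existsP/orP.
- by case=> x /andP[]; rewrite inE => /orP[] Sx rxy; [left|right];
    apply/existsP; exists x; rewrite Sx.
- by case=> /existsP[x /andP[Sx rxy]]; exists x; rewrite inE Sx ?orbT.
Qed.

Lemma neighbours_mem r S x y : x \in S -> r x y -> y \in neighbours r S.
Proof. by move=> Sx rxy; rewrite inE; apply/existsP; exists x; rewrite Sx. Qed.

Lemma matching_glue r A1 A2 f1 f2 :
  matching r A1 f1 -> matching r A2 f2 -> {in A2, forall x, f2 x \notin f1 @: A1} ->
  matching r (A1 :|: A2) (fun x => if x \in A1 then f1 x else f2 x).
Proof.
move=> [inj1 r1] [inj2 r2] f2_out; split=> [x y|x]; rewrite !inE.
- case A1x: (x \in A1); case A1y: (y \in A1) => //= Ax Ay; first exact: inj1.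
  + by move=> e; case/negP: (f2_out y Ay); rewrite -e imset_f.
  + by move=> e; case/negP: (f2_out x Ax); rewrite e imset_f.
  + exact: inj2.
- by case A1x: (x \in A1) => //= Ax; [apply: r1 | apply: r2].
Qed.

Section HallStep.
Variable n : nat.
Hypothesis IHn : forall r A, #|A| <= n -> hall_condition r A ->
  exists f, matching r A f.

(* A critical set S matches inside its own neighbourhood; the rest of A
   still satisfies Hall's condition once N(S) is removed. *)
Lemma hall_step_critical r A S :
  #|A| <= n.+1 -> hall_condition r A -> S \subset A -> S != set0 -> S != A ->
  #|neighbours r S| <= #|S| -> exists f, matching r A f.
Proof.
move=> leAn hallA sSA S0 SA leNS.
have ltSA : #|S| < #|A| by apply: proper_card; rewrite properEneq SA.
have [f1 match1] : exists f, matching r S f.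
  by apply: IHn => [|S' sS'S]; [lia | apply: hallA; apply: subset_trans sSA].
pose r2 : rel T := fun x y => r x y && (y \notin neighbours r S).
have [f2 match2] : exists f, matching r2 (A :\: S) f.
  apply: IHn => [|S' sS'AS].
    by have := cardsID S A; have := card_gt0 S; rewrite S0 (setIidPr sSA); lia.
  have /andP[sS'A disS'S] : (S' \subset A) && [disjoint S' & S] by rewrite -subsetD.
  have := hallA (S' :|: S); rewrite subUset sSA sS'A.
  rewrite neighboursU => /(_ isT).
  have sub : neighbours r S' :\: neighbours r S \subset neighbours r2 S'.
    apply/subsetP=> y; rewrite !inE => /andP[NSy /existsP[x /andP[S'x rxy]]].
    by apply/existsP; exists x; rewrite S'x /r2 rxy inE NSy.
  have := subset_leq_card sub; rewrite cardsD.
  have := leq_card_setU S' S; rewrite disS'S => -[_ /eqP ->].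
  have := cardsUI (neighbours r S') (neighbours r S); lia.
have [inj2 r2f] := match2.
exists (fun x => if x \in S then f1 x else f2 x).
have -> : A = S :|: (A :\: S) by rewrite -{1}(setID A S) (setIidPr sSA).
apply: matching_glue => //; first by split=> // x Ax; case/andP: (r2f x Ax).
move=> x Ax; case/andP: (r2f x Ax) => _; apply: contra.
by case/imsetP=> x' Sx' ->; apply: neighbours_mem Sx' (match1.2 x' Sx').
Qed.

(* With surplus everywhere, any edge a -- b can be used, since removing b
   costs each proper subset at most one neighbour. *)
Lemma hall_step_surplus r A :
  #|A| <= n.+1 -> hall_condition r A ->
  (forall S, S \subset A -> S != set0 -> S != A -> #|S| < #|neighbours r S|) ->
  exists f, matching r A f.
Proof.
move=> leAn hallA surplus.
have [->|[a Aa]] := set_0Vmem A.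
  by exists id; split=> x; rewrite inE.
have [b Nab] : exists b, b \in neighbours r [set a].
  by apply/set0Pn; rewrite -card_gt0; have := hallA [set a]; rewrite sub1set Aa cards1; apply.
have rab : r a b by move: Nab; rewrite inE => /existsP[a' /andP[/set1P -> //]].
pose r' : rel T := fun x y => r x y && (y != b).
have [f' [inj' r'f]] : exists f, matching r' (A :\ a) f.
  apply: IHn => [|S sSAa]; first by have := cardsD1 a A; rewrite Aa; lia.
  have [->|S0] := eqVneq S set0; first by rewrite cards0.
  have sSA : S \subset A := subset_trans sSAa (subsetDl _ _).
  have SA : S != A.
    by apply/eqP=> eSA; have := subsetP sSAa a; rewrite eSA Aa !inE eqxx => /(_ isT).
  have sub : neighbours r S :\ b \subset neighbours r' S.
    apply/subsetP=> y; rewrite !inE => /andP[yb /existsP[x /andP[Sx rxy]]].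
    by apply/existsP; exists x; rewrite Sx /r' rxy yb.
  have := subset_leq_card sub; have := cardsD1 b (neighbours r S).
  have := surplus S sSA S0 SA; lia.
exists (fun x => if x \in [set a] then b else f' x).
rewrite -(setD1K Aa).
apply: matching_glue; first by split=> [x y /set1P -> /set1P ->|x /set1P ->].
  by split=> // x Aax; case/andP: (r'f x Aax).
by move=> x Aax; rewrite imset_set1 inE; case/andP: (r'f x Aax).
Qed.

End HallStep.

Lemma hall_matching r A : hall_condition r A -> exists f, matching r A f.
Proof.
move: {2}#|A| (leqnn #|A|) => n; elim: n r A => [|n IHn] r A leAn hallA.
  by exists id; split=> x; rewrite (cards0_eq (_ : #|A| = 0)) ?inE //; lia.
have [/existsP[S /and4P[sSA S0 SA leNS]]|] :=
  boolP [exists S : {set T}, [&& S \subset A, S != set0, S != A & #|neighbours r S| <= #|S|]].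
  exact: (hall_step_critical IHn leAn hallA sSA S0 SA leNS).
rewrite negb_exists => /forallP surplus.
apply: (hall_step_surplus IHn) => // S sSA S0 SA.
by have := surplus S; rewrite sSA S0 SA /= -ltnNge.
Qed.

End Hall.

(** * Rectangles covered by a relation and the graph of a permutation *)

Definition converse (T : Type) (E : rel T) : rel T := fun x y => E y x.

Section Covers.
Variable T : finType.
Implicit Types (E : rel T) (s : {perm T}) (A B S U Z : {set T}).

Definition covers E s S U := {in S & U, forall x y, E x y || (s x == y)}.

Definition obstructed E s := exists S U, #|S| + #|U| = #|T|.+1 /\ covers E s S U.

Lemma covers_converse E s S U : covers E s S U -> covers (converse E) s^-1 U S.
Proof.
move=> cov y x Uy Sx; rewrite /converse; case/orP: (cov x y Sx Uy) => [->//|/eqP <-].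
by rewrite permK eqxx orbT.
Qed.

Lemma obstructed_converse E s : obstructed E s -> obstructed (converse E) s^-1.
Proof.
by case=> S [U [card_SU cov]]; exists U, S; rewrite addnC; split=> //; apply: covers_converse.
Qed.

(* Hall's theorem for the bipartite complement of E and the graph of s. *)
Lemma obstructed_of_no_derangement E s :
  ~ (exists tau : {perm T}, forall x, ~~ E x (tau x) && (tau x != s x)) ->
  obstructed E s.
Proof.
move=> no_tau; pose r : rel T := fun x y => ~~ E x y && (y != s x).
have [/forallP hall | ] := boolP [forall S : {set T}, #|S| <= #|neighbours r S|].
  have [f [inj_f r_f]] := @hall_matching _ r [set: T] (fun S _ => hall S).
  have inj : injective f by move=> x y; apply: inj_f; rewrite inE.
  by case: no_tau; exists (perm inj) => x; rewrite permE; apply: r_f; rewrite inE.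
rewrite negb_forall => /existsP[S]; rewrite -ltnNge => ltNS.
have [S' sS'S card_S'] :
    exists2 S' : {set T}, S' \subset S & #|S'| = #|T|.+1 - #|~: neighbours r S|.
  by apply: subset_of_card; rewrite cardsCs setCK; lia.
exists S', (~: neighbours r S); split; first by rewrite card_S' cardsCs setCK; lia.
move=> x y S'x; rewrite inE => NSy; apply: contraR NSy => Exy.
by apply: neighbours_mem (subsetP sS'S x S'x) _; rewrite /r negb_or eq_sym in Exy *.
Qed.

Definition edges E A B := \sum_(x in A) #|[set y in B | E x y]|.

Lemma edges_converse E A B : edges (converse E) B A = edges E A B.
Proof.
rewrite /edges (eq_bigr (fun y => \sum_(x in A) E x y)); last first.
  by move=> y _; rewrite card_set_sum.
by rewrite exchange_big /=; apply: eq_bigr => x _; rewrite card_set_sum.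
Qed.

(* Inside a covered rectangle only the cells of the graph of s may miss E. *)
Lemma edges_cover E s S U A B : covers E s S U -> A \subset S -> B \subset U ->
  #|A| * #|B| <= edges E A B + minn #|A| #|B|.
Proof.
move=> cov sAS sBU; set D := [set x in A | s x \in B].
have row x : x \in A -> #|B| <= #|[set y in B | E x y]| + (s x \in B).
  move=> Ax; rewrite (cardsD1 (s x) B) addnC leq_add2r; apply: subset_leq_card.
  apply/subsetP=> y; rewrite !inE => /andP[ysx By]; rewrite By.
  case/orP: (cov x y (subsetP sAS x Ax) (subsetP sBU y By)) => // /eqP e.
  by rewrite e eqxx in ysx.
have DA : #|D| <= #|A| by apply/subset_leq_card/subsetP=> x; rewrite inE => /andP[].
have DB : #|D| <= #|B|.
  rewrite -(card_imset D (@perm_inj _ s)); apply/subset_leq_card/subsetP=> y.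
  by case/imsetP=> x; rewrite inE => /andP[_ Bsx] ->.
rewrite -sum_nat_const; apply: leq_trans (leq_sum _ row) _.
by rewrite big_split /= -card_set_sum leq_add2l leq_min DA DB.
Qed.

Lemma edges_le_card E A B Z :
  {in A, forall x, #|[set y in B | E x y]| <= (x \in Z)} -> edges E A B <= #|Z|.
Proof.
move=> row; apply: leq_trans (leq_sum _ row) _; rewrite -card_set_sum.
by apply/subset_leq_card/subsetP=> x; rewrite inE => /andP[].
Qed.

End Covers.

(** * Relations of out-degree at most four on 'I_8 *)

Definition outdeg_le4 (E : rel 'I_8) := forall x, #|[set y | E x y]| <= 4.

Definition near_block (E : rel 'I_8) (I : {set 'I_8}) (s0 : 'S_8) (z c : 'I_8) :=
  #|I| = 5 /\
  {in I & s0 @: I, forall x y, y != s0 x -> E x y || (x == z) && (y == c)}.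

Lemma near_block_converse E I s0 z c :
  near_block E I s0 z c -> near_block (converse E) (s0 @: I) s0^-1 c z.
Proof.
case=> cardI blk; split; first by rewrite card_perm_imset.
move=> y x Ky; rewrite perm_imsetK => Ix xy; rewrite /converse andbC.
by apply: blk => //; apply: contraNneq xy => ->; rewrite permK.
Qed.

Section Rows.
Variable E : rel 'I_8.
Hypothesis E_row : outdeg_le4 E.

Lemma covers_row_sub s S U x : covers E s S U -> x \in S -> U :\ s x \subset [set y | E x y].
Proof.
move=> cov Sx; apply/subsetP=> y; rewrite !inE => /andP[ysx Uy].
by case/orP: (cov x y Sx Uy) => // /eqP e; rewrite e eqxx in ysx.
Qed.

Lemma covers_card_row s S U x : covers E s S U -> x \in S -> #|U| <= 5.
Proof.
move=> cov Sx; have := subset_leq_card (covers_row_sub cov Sx).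
by have := E_row x; have := cardsD1 (s x) U; case: (s x \in U) => /=; lia.
Qed.

Lemma covers_full_row s S U x : covers E s S U -> x \in S -> #|U| = 5 ->
  s x \in U /\ [set y | E x y] = U :\ s x.
Proof.
move=> cov Sx cardU; have sub := covers_row_sub cov Sx.
have := subset_leq_card sub; have := E_row x; have := cardsD1 (s x) U.
rewrite cardU; case: (s x \in U) => /= cardD leR leD; last first.
  by exfalso; move: cardD leR leD; abstract_cards; lia.
split=> //; apply/esym/eqP; rewrite eqEcard sub /=; move: cardD leR leD; abstract_cards; lia.
Qed.

Lemma near_block_row I s0 z c x : near_block E I s0 z c -> x \in I -> x != z ->
  [set y | E x y] = s0 @: I :\ s0 x.
Proof.
case=> cardI blk Ix xz.
have sub : s0 @: I :\ s0 x \subset [set y | E x y].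
  apply/subsetP=> y; rewrite !inE => /andP[ysx Ky].
  by have := blk x y Ix Ky ysx; rewrite (negbTE xz) orbF.
apply/esym/eqP; rewrite eqEcard sub /=; have := E_row x.
have := cardsD1 (s0 x) (s0 @: I); rewrite imset_f // card_perm_imset cardI.
by abstract_cards; lia.
Qed.

Lemma near_block_row_out I s0 z c : near_block E I s0 z c -> z \in I ->
  #|[set y in ~: (s0 @: I) | E z y]| <= 1.
Proof.
case=> cardI blk Iz; set K := s0 @: I.
have sub : K :\ s0 z :\ c \subset [set y | E z y].
  apply/subsetP=> y; rewrite !inE => /and3P[yc ysz Ky].
  by have := blk z y Iz Ky ysz; rewrite eqxx (negbTE yc) orbF.
have subO : [set y in ~: K | E z y] \subset [set y | E z y].
  by apply/subsetP=> y; rewrite !inE => /andP[].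
have disO : [disjoint [set y in ~: K | E z y] & K :\ s0 z :\ c].
  by rewrite -setI_eq0; apply/eqP/setP=> y; rewrite !inE; case: (y \in K); rewrite ?andbF.
have := card_disjoint_sub subO sub disO; have := E_row z.
have := cardsD1 c (K :\ s0 z); have := leq_b1 (c \in K :\ s0 z).
have := cardsD1 (s0 z) K; rewrite imset_f // card_perm_imset cardI; abstract_cards; lia.
Qed.

Lemma near_block_edges_out I s0 z c (A B : {set 'I_8}) : near_block E I s0 z c ->
  A \subset I -> B \subset ~: (s0 @: I) -> edges E A B <= 1.
Proof.
move=> nb sAI sBK; have := @edges_le_card _ E A B [set z]; rewrite cards1.
apply=> x /(subsetP sAI) Ix.
rewrite in_set1; move: Ix; have [-> Iz | xz Ix] := eqVneq x z.
  apply: leq_trans (near_block_row_out nb Iz); apply/subset_leq_card/subsetP=> y.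
  by rewrite !inE => /andP[/(subsetP sBK)]; rewrite inE => -> ->.
rewrite leqn0 cards_eq0; apply/eqP/setP=> y; rewrite !inE; apply/negbTE/andP.
case=> /(subsetP sBK); rewrite inE => nKy; have /setP/(_ y) := near_block_row nb Ix xz.
by rewrite !inE => ->; rewrite (negbTE nKy) andbF.
Qed.

End Rows.

Section DegreeFour.
Variable E : rel 'I_8.
Hypotheses (E_row : outdeg_le4 E) (E_col : outdeg_le4 (converse E)).
Implicit Types (s : 'S_8) (S U : {set 'I_8}).

Lemma covers_card s S U : covers E s S U -> #|S| + #|U| = 9 -> #|S| <= 5 /\ #|U| <= 5.
Proof.
move=> cov card_SU; have := max_card U; have := max_card S; rewrite !card_ord => leS leU.
have [x Sx] : exists x, x \in S by apply/card_gt0P; move: card_SU leU; abstract_cards; lia.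
have [y Uy] : exists y, y \in U by apply/card_gt0P; move: card_SU leS; abstract_cards; lia.
split; first exact: (covers_card_row E_col (covers_converse cov) Uy).
exact: (covers_card_row E_row cov Sx).
Qed.

Lemma near_block_diag I s0 z c x : near_block E I s0 z c -> x \in I -> ~~ E x (s0 x).
Proof.
move=> nb Ix; have [xz|xz] := eqVneq x z; last first.
  by have /setP/(_ (s0 x)) := near_block_row E_row nb Ix xz; rewrite !inE eqxx => ->.
apply/negP=> Ex; have [cardI _] := nb.
have sub : I \subset [set x' | E x' (s0 x)].
  apply/subsetP=> x' Ix'; rewrite inE; have [-> //|x'x] := eqVneq x' x.
  have x'z : x' != z by rewrite -xz.
  have /setP/(_ (s0 x)) := near_block_row E_row nb Ix' x'z; rewrite !inE.
  by rewrite imset_f // (inj_eq (@perm_inj _ s0)) eq_sym x'x => ->.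
by have := subset_leq_card sub; have := E_col (s0 x); rewrite cardI; abstract_cards; lia.
Qed.

Section TightCover.
Variables (s1 : 'S_8) (S1 U1 : {set 'I_8}).
Hypotheses (cov1 : covers E s1 S1 U1) (card_S1 : #|S1| = 4) (card_U1 : #|U1| = 5).

Lemma tight_row x : x \in S1 -> s1 x \in U1 /\ [set y | E x y] = U1 :\ s1 x.
Proof. by move=> S1x; apply: (covers_full_row E_row cov1 S1x card_U1). Qed.

Lemma tight_col_out y : y \in U1 -> #|[set x in ~: S1 | E x y]| <= 1.
Proof.
move=> U1y; have sub := covers_row_sub (covers_converse cov1) U1y.
have subO : [set x in ~: S1 | E x y] \subset [set x | converse E y x].
  by apply/subsetP=> x; rewrite !inE => /andP[].
have disO : [disjoint [set x in ~: S1 | E x y] & S1 :\ (s1^-1)%g y].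
  by rewrite -setI_eq0; apply/eqP/setP=> x; rewrite !inE; case: (x \in S1); rewrite ?andbF.
have := card_disjoint_sub subO sub disO; have := E_col y.
have := cardsD1 ((s1^-1)%g y) S1; have := leq_b1 ((s1^-1)%g y \in S1).
by rewrite card_S1; abstract_cards; lia.
Qed.

Lemma tight_free_col :
  exists v, [/\ v \in U1, v \notin s1 @: S1 & forall x, E x v -> x \in S1].
Proof.
have [v] : exists v, v \in U1 :\: s1 @: S1.
  apply/card_gt0P; rewrite cardsD; have := subset_leq_card (subsetIr U1 (s1 @: S1)).
  by rewrite card_perm_imset card_S1 card_U1; abstract_cards; lia.
rewrite inE => /andP[vS1 U1v]; exists v; split=> // x Exv.
have sub : S1 \subset [set x | E x v].
  apply/subsetP=> x' S1x'; rewrite inE.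
  case/orP: (cov1 S1x' U1v) => // /eqP e.
  by rewrite -e (imset_f _ S1x') in vS1.
have /eqP eS1 : S1 == [set x | E x v] by rewrite eqEcard sub /= card_S1; apply: E_col.
by rewrite eS1 inE.
Qed.

Section SecondCover.
Variables (s2 : 'S_8) (S2 U2 : {set 'I_8}).
Hypotheses (cov2 : covers E s2 S2 U2) (card_SU2 : #|S2| + #|U2| = 9).

Lemma tight_cover_cols : U2 \subset U1.
Proof.
have edges1 : edges E (S2 :&: S1) (U2 :\: U1) <= #|@set0 'I_8|.
  apply: edges_le_card => x; rewrite inE => /andP[_ S1x]; rewrite inE leqn0 cards_eq0.
  apply/eqP/setP=> y; rewrite !inE; apply/negbTE/andP=> -[/andP[U1y _] Exy].
  have [_ /setP/(_ y)] := tight_row S1x; rewrite !inE Exy => /esym/andP[_].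
  by rewrite (negbTE U1y).
have edges2 : edges E (S2 :\: S1) (U2 :&: U1) <= #|U2 :&: U1|.
  rewrite -edges_converse; apply: edges_le_card => y B2y; rewrite B2y.
  have U1y : y \in U1 by move: B2y; rewrite inE => /andP[].
  apply: leq_trans (tight_col_out U1y); apply/subset_leq_card/subsetP=> x.
  by rewrite !inE => /andP[/andP[S1x _] Exy]; rewrite S1x.
have leB1 : #|U2 :\: U1| <= 3.
  have := subset_leq_card (subsetDr U2 U1); have := cardsC U1.
  by rewrite card_ord card_U1; abstract_cards; lia.
suff : #|U2 :\: U1| = 0 by move/eqP; rewrite cards_eq0 setD_eq0.
have := edges_cover cov2 (subsetIl S2 S1) (subsetDl U2 U1).
have := edges_cover cov2 (subsetDl S2 S1) (subsetIl U2 U1).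
have := cardsID S1 S2; have := cardsID U1 U2; have := covers_card cov2 card_SU2.
have := card_SU2; move: edges1 edges2 leB1; rewrite cards0.
abstract_cards => e1 e2 leB1 sum2 [leS2 leU2] cardU2 cardS2 bnd2 bnd1; nia.
Qed.

Lemma tight_cover_agree : S2 \subset S1 -> {in S1, s2 =1 s1}.
Proof.
move=> sS21; have [leS2 leU2] := covers_card cov2 card_SU2.
have card_U2 : #|U2| = 5.
  move: leU2; have := subset_leq_card sS21; have := card_SU2.
  by rewrite card_S1; abstract_cards; lia.
have /eqP eU : U2 == U1 by rewrite eqEcard tight_cover_cols card_U1 card_U2.
have /eqP eS : S2 == S1.
  by rewrite eqEcard sS21 card_S1; have := card_SU2; rewrite card_U2; abstract_cards; lia.
move=> x S1x; rewrite -eS in S1x; have [U2s2x row2] := covers_full_row E_row cov2 S1x card_U2.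
rewrite eS eU in S1x U2s2x; case/orP: (cov1 S1x U2s2x) => [Exs2x | /eqP //].
by move/setP/(_ (s2 x)): row2; rewrite !inE Exs2x eqxx.
Qed.

(* The new row z sees, outside the free column v of U1, all of U1 but at most
   one column c; s1 patched to send z to v then exhibits a near block. *)
Lemma tight_cover_near_block z : z \in S2 -> z \notin S1 ->
  exists s0 c, near_block E (z |: S1) s0 z c.
Proof.
move=> S2z S1z; have [v [U1v s1v col_v]] := tight_free_col.
have row_z : #|(U1 :\ v) :\: [set y | E z y]| <= 1.
  have sub : U2 :\ s2 z \subset (U1 :\ v) :&: [set y | E z y].
    apply/subsetP=> y; rewrite !inE => /andP[ys2z U2y].
    have Ezy : E z y by case/orP: (cov2 S2z U2y) => // /eqP e; rewrite e eqxx in ys2z.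
    rewrite Ezy (subsetP tight_cover_cols y U2y) andbT andbT.
    by apply: contraNneq S1z => yv; apply: col_v; rewrite -yv.
  have [leS2 _] := covers_card cov2 card_SU2; move: leS2.
  have := subset_leq_card sub; have := cardsD1 (s2 z) U2; have := leq_b1 (s2 z \in U2).
  have := cardsD (U1 :\ v) [set y | E z y]; have := cardsD1 v U1.
  by rewrite U1v card_U1; have := card_SU2; abstract_cards; lia.
have [c sub_c] := card_le1_sub1 z row_z.
pose s0 := (s1 * tperm (s1 z) v)%g.
have s0_S1 : {in S1, s0 =1 s1}.
  move=> x S1x; rewrite permM tpermD //.
    by rewrite (inj_eq (@perm_inj _ s1)); apply: contraNneq _ S1z => ->.
  by apply: contraNneq _ s1v => ->; apply: imset_f.
have s0_z : s0 z = v by rewrite permM tpermL.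
have KU1 : {subset s0 @: (z |: S1) <= U1}.
  move=> y /imsetP[x /setU1P[-> -> | S1x ->]]; first by rewrite s0_z.
  by rewrite s0_S1 //; case: (tight_row S1x).
exists s0, c; split; first by rewrite cardsU1 S1z card_S1.
move=> x y /setU1P[-> | S1x] /KU1 U1y.
  rewrite s0_z eqxx /= => yv; case Ezy: (E z y) => //=.
  by have := subsetP sub_c y; rewrite !inE yv U1y Ezy => /(_ isT).
rewrite s0_S1 // => ys1x; have [_ /setP/(_ y)] := tight_row S1x.
by rewrite !inE ys1x U1y => ->.
Qed.

Lemma tight_cover_pair :
  {in S1, s2 =1 s1} \/ exists I s0 z c, near_block E I s0 z c.
Proof.
have [sS21 | /subsetPn[z S2z S1z]] := boolP (S2 \subset S1).
  by left; apply: tight_cover_agree.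
by right; have [s0 [c nb]] := tight_cover_near_block S2z S1z; exists (z |: S1), s0, z, c.
Qed.

End SecondCover.

Lemma tight_structure (P : pred 'S_8) :
  (forall s, P s -> obstructed E s) ->
  (forall s, P s -> {in S1, s =1 s1}) \/ exists I s0 z c, near_block E I s0 z c.
Proof.
move=> obstr.
have [/forallP agree | ] := boolP [forall s, P s ==> [forall x in S1, s x == s1 x]].
  by left=> s Ps x S1x; have /implyP/(_ Ps)/forall_inP/(_ x S1x)/eqP := agree s.
rewrite negb_forall => /existsP[s]; rewrite negb_imply => /andP[Ps disagree].
have [S2 [U2 [card_SU2 cov2]]] := obstr s Ps; rewrite card_ord in card_SU2.
have [agree | //] := tight_cover_pair cov2 card_SU2; last by right.
by case/negP: disagree; apply/forall_inP=> x S1x; rewrite agree.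
Qed.

End TightCover.

Lemma near_block_cover_inside I s0 z c s S U :
  near_block E I s0 z c -> covers E s S U -> #|S| + #|U| = 9 ->
  S \subset I /\ U \subset s0 @: I.
Proof.
move=> nb cov card_SU; have [cardI _] := nb; set K := s0 @: I.
have edges1 : edges E (S :\: I) (U :&: K) <= 1.
  rewrite -edges_converse; apply: (near_block_edges_out E_col (near_block_converse nb)).
    exact: subsetIr.
  by rewrite perm_imsetK; apply: subsetDr.
have edges2 : edges E (S :&: I) (U :\: K) <= 1.
  exact: (near_block_edges_out E_row nb (subsetIr S I) (subsetDr U K)).
rewrite -!setD_eq0 -!cards_eq0; have [leS leU] := covers_card cov card_SU.
have := subset_leq_card (subsetDr S I); have := cardsC I.
have := subset_leq_card (subsetDr U K); have := cardsC K.
have := edges_cover cov (subsetDl S I) (subsetIl U K).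
have := edges_cover cov (subsetIl S I) (subsetDl U K).
have := cardsID I S; have := cardsID K U; move: edges1 edges2 leS leU card_SU.
rewrite card_ord card_perm_imset cardI; abstract_cards => *.
by split; apply/eqP; nia.
Qed.

(* On S :&: s0 @^-1: U, which has at least |S| + |U| - |I| = 4 points, s
   must agree with s0 because E misses the graph of s0 on I. *)
Lemma near_block_cover I s0 z c s S U :
  near_block E I s0 z c -> covers E s S U -> #|S| + #|U| = 9 ->
  4 <= #|[set i in I | s i == s0 i]|.
Proof.
move=> nb cov card_SU; have [cardI _] := nb.
have [SI UK] := near_block_cover_inside nb cov card_SU.
set D := S :&: s0 @^-1: U.
have sub : D \subset [set i in I | s i == s0 i].
  apply/subsetP=> i; rewrite !inE => /andP[Si U_s0i]; have Ii := subsetP SI i Si.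
  have := cov i (s0 i) Si U_s0i; rewrite Ii (negbTE (near_block_diag nb Ii)).
  by rewrite eq_sym.
apply: leq_trans (subset_leq_card sub).
have sUI : S :|: s0 @^-1: U \subset I.
  rewrite subUset SI; apply/subsetP=> i; rewrite inE => /(subsetP UK).
  by rewrite mem_imset //; apply: perm_inj.
have := cardsUI S (s0 @^-1: U); have := subset_leq_card sUI.
rewrite card_preimset; last by apply: perm_inj.
by move: card_SU; rewrite cardI -/D; abstract_cards; lia.
Qed.

End DegreeFour.

Lemma obstructed_structure E (P : pred 'S_8) :
  outdeg_le4 E -> outdeg_le4 (converse E) -> (forall s, P s -> obstructed E s) ->
  (exists (J : {set 'I_8}) (s1 : 'S_8), #|J| = 4 /\ forall s, P s -> {in J, s =1 s1}) \/
  exists I s0 z c, near_block E I s0 z c.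
Proof.
move=> E_row E_col obstr.
have [s1 Ps1 | noP] := pickP P; last first.
  have [J _ card_J] : exists2 J : {set 'I_8}, J \subset setT & #|J| = 4.
    by apply: subset_of_card; rewrite cardsT card_ord.
  by left; exists J, 1%g; split=> // s; rewrite noP.
have [S1 [U1 [card_SU1 cov1]]] := obstr s1 Ps1; rewrite card_ord in card_SU1.
have [leS1 leU1] := covers_card E_row E_col cov1 card_SU1.
have [card_S1 | card_S1] : #|S1| = 4 \/ #|S1| = 5.
    by move: leS1 leU1 card_SU1; abstract_cards; lia.
  have card_U1 : #|U1| = 5 by move: card_SU1; rewrite card_S1; abstract_cards; lia.
  have [agree | nb] := tight_structure E_row E_col cov1 card_S1 card_U1 obstr; last by right.
  by left; exists S1, s1.
have card_U1 : #|U1| = 4 by move: card_SU1; rewrite card_S1; abstract_cards; lia.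
have obstrC s : P (s^-1)%g -> obstructed (converse E) s.
  by move/obstr/obstructed_converse; rewrite invgK.
have [agree | [I [s0 [z [c nb]]]]] :=
  tight_structure E_col E_row (covers_converse cov1) card_U1 card_S1 obstrC.
  left; exists ((s1^-1)%g @: U1), s1; split; first by rewrite card_perm_imset.
  move=> s Ps x /imsetP[y U1y ->]; have := agree (s^-1)%g; rewrite invgK.
  by move=> /(_ Ps y U1y) e; rewrite -[in LHS]e !permKV.
by right; exists (s0 @: I), (s0^-1)%g, c, z; apply: near_block_converse nb.
Qed.

(** * Permutations agreeing with a given one *)

Section Agreement.
Variable T : finType.
Implicit Types (I J : {set T}).

Definition agreeing (s0 : {perm T}) J : {set {perm T}} :=
  [set s : {perm T} | [forall x in J, s x == s0 x]].

Lemma card_agreeing (s0 : {perm T}) J : #|agreeing s0 J| = #|~: J|`!.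
Proof.
rewrite -card_perm.
have -> : agreeing s0 J = [set (r * s0)%g | r in perm_on (~: J)].
  apply/setP=> s; rewrite inE; apply/forall_inP/imsetP.
  - move=> agree; exists (s * s0^-1)%g; last by rewrite mulgKV.
    apply/subsetP=> x; rewrite !inE permM; apply: contra => Jx.
    by rewrite (eqP (agree x Jx)) permK.
  - by case=> r r_on -> x Jx; rewrite permM (out_perm r_on) // inE Jx.
by rewrite card_imset //; apply: mulIg.
Qed.

(* Such a permutation lies in agreeing s0 I or, for some i in I, in
   agreeing s0 (I :\ i) but not in agreeing s0 I. *)
Lemma card_agree_all_but_one (s0 : {perm T}) I :
  #|[set s : {perm T} | #|I|.-1 <= #|[set i in I | s i == s0 i]|]| <=
  #|~: I|`! + #|I| * (#|~: I|.+1`! - #|~: I|`!).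
Proof.
set A := [set s : {perm T} | _].
have sub : A \subset
    agreeing s0 I :|: \bigcup_(i in I) (agreeing s0 (I :\ i) :\: agreeing s0 I).
  apply/subsetP=> s; rewrite !inE => agree_s; apply/orP.
  have [|] := boolP [forall x in I, s x == s0 x]; first by left.
  rewrite negb_forall_in => /existsP[i /andP[Ii si]]; right.
  apply/bigcupP; exists i => //; rewrite !inE negb_forall_in; apply/andP; split.
    by apply/existsP; exists i; rewrite Ii.
  have sub_i : [set x in I | s x == s0 x] \subset I :\ i.
    apply/subsetP=> x; rewrite !inE => /andP[Ix /eqP sx]; rewrite Ix andbT.
    by apply: contraNneq si => <-; rewrite sx.
  have := cardsD1 i I; rewrite Ii => cardI.
  have /eqP eq_i : [set x in I | s x == s0 x] == I :\ i.
    by rewrite eqEcard sub_i /=; move: agree_s; rewrite cardI; abstract_cards; lia.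
  by apply/forall_inP=> x; rewrite -eq_i inE => /andP[].
apply: leq_trans (subset_leq_card sub) _; apply: leq_trans (leq_card_setU _ _) _.
rewrite card_agreeing leq_add2l; apply: leq_trans (card_bigcup_le _ _) _.
rewrite -sum_nat_const; apply: leq_sum => i Ii; rewrite cardsDS; last first.
  apply/subsetP=> s; rewrite !inE => /forall_inP agree.
  by apply/forall_inP=> x /setD1P[_ /agree].
rewrite !card_agreeing; have -> // : #|~: (I :\ i)| = #|~: I|.+1.
have := cardsC I; have := cardsC (I :\ i); have := cardsD1 i I; rewrite Ii.
by abstract_cards; lia.
Qed.

End Agreement.

(** * Simultaneous derangements *)

Definition forbidden (p1 p2 p3 p4 : 'S_8) : rel 'I_8 :=
  fun x y => [|| y == p1 x, y == p2 x, y == p3 x | y == p4 x].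

Lemma outdeg_forbidden p1 p2 p3 p4 : outdeg_le4 (forbidden p1 p2 p3 p4).
Proof.
move=> x; apply: leq_trans (card_le4 (p1 x) (p2 x) (p3 x) (p4 x)).
by apply/subset_leq_card/subsetP=> y; rewrite !inE /forbidden -!orbA.
Qed.

Lemma outdeg_forbidden_converse p1 p2 p3 p4 :
  outdeg_le4 (converse (forbidden p1 p2 p3 p4)).
Proof.
move=> y; apply: leq_trans (card_le4 (p1^-1 y) (p2^-1 y) (p3^-1 y) (p4^-1 y))%g.
apply/subset_leq_card/subsetP=> x; rewrite !inE /converse /forbidden -!orbA.
by case/or4P=> /eqP ->; rewrite permK eqxx ?orbT.
Qed.

Lemma bad_obstructed p1 p2 p3 p4 s :
  bad p1 p2 p3 p4 s -> obstructed (forbidden p1 p2 p3 p4) s.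
Proof.
move=> bad_s; apply: obstructed_of_no_derangement => -[tau tau_avoids].
case/negP: bad_s; apply/existsP; exists tau; apply/and5P.
by split; apply/forallP=> i; case/andP: (tau_avoids i); rewrite !negb_or => /and4P[].
Qed.

Theorem mainTheorem15 (p1 p2 p3 p4 : 'S_8) :
  #|bad_set p1 p2 p3 p4| <= 96 /\
  (24 < #|bad_set p1 p2 p3 p4| ->
   exists (s0 : 'S_8) (I : {set 'I_8}),
     #|I| = 5 /\
     forall tau, tau \in bad_set p1 p2 p3 p4 ->
       4 <= #|[set i in I | tau i == s0 i]|).
Proof.
have E_row := outdeg_forbidden p1 p2 p3 p4.
have E_col := outdeg_forbidden_converse p1 p2 p3 p4.
have obstr s : s \in bad_set p1 p2 p3 p4 -> obstructed (forbidden p1 p2 p3 p4) s.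
  by rewrite inE => /bad_obstructed.
have [[J [s1 [card_J agree]]] | [I [s0 [z [c nb]]]]] := obstructed_structure E_row E_col obstr.
  have sub : bad_set p1 p2 p3 p4 \subset agreeing s1 J.
    by apply/subsetP=> s bad_s; rewrite inE; apply/forall_inP=> x Jx; rewrite agree.
  have := subset_leq_card sub; rewrite card_agreeing.
  have -> : #|~: J| = 4 by have := cardsC J; rewrite card_J card_ord; lia.
  rewrite (_ : 4`! = 24) // => le24; split=> [|lt24]; first exact: leq_trans le24 _.
  by move: lt24 le24; abstract_cards; lia.
have [card_I _] := nb.
have sub : bad_set p1 p2 p3 p4 \subset
    [set s : 'S_8 | #|I|.-1 <= #|[set i in I | s i == s0 i]|].
  apply/subsetP=> s /obstr[S [U [card_SU cov]]]; rewrite card_ord in card_SU.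
  by rewrite inE card_I; apply: (near_block_cover E_row E_col nb cov).
have := leq_trans (subset_leq_card sub) (card_agree_all_but_one s0 I).
have -> : #|~: I| = 3 by have := cardsC I; rewrite card_I card_ord; lia.
rewrite card_I (_ : _ + _ = 96) // => le96; split=> // _; exists s0, I; split=> // s.
by move/(subsetP sub); rewrite inE card_I.
Qed.
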